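(* Let $m,n,k$ be positive integers with $(m,k-1)=1$ and $n=\mathrm{ind}_m(k)$, let $G=G(m,n,k)=\langle a,b;\ a^m=1,\ b^n=1,\ b^{-1}ab=a^k\rangle$, $R=\{k_j:j\in\mathbb{Z}_n\}$ and $L=\{-k_j:j\in\mathbb{Z}_n\}$. (i) If $\mathrm{orb}(x,R^* )$ is basic for every $x\in R^*$, then $\mathrm{P}(G)=\dot{\bigcup}_{x\in R^*}C(x,1)$ and $|\mathrm{P}(G)|=|R^*|\,m$. (ii) If $\mathrm{orb}(x,L^* )$ is basic for every $x\in L^*$, then $\Lambda(G)=\dot{\bigcup}_{x\in L^*}C(x,1)$ and $|\Lambda(G)|=|L^*|\,m$.
   Context: $\mathrm{ind}_m(k)$ is the least positive integer $d$ with $k^d\equiv1\pmod m$; $k_t=k^t-1\pmod m$. Elements of $G$ are written uniquely as $a^ib^j$, $i\in\mathbb{Z}_m$, $j\in\mathbb{Z}_n$. Commutators are $[x,y]=x^{-1}y^{-1}xy$; $(x)\rho(g)=[x,g]$, $(x)\lambda(g)=[g,x]$; maps are written on the right and composed left to right; $\mathrm{P}(G)$ and $\Lambda(G)$ are the semigroups generated by all $\rho(g)$, resp. all $\lambda(g)$. For $x,y\in\mathbb{Z}_m$, the map $\mu(x,y):G\to G$ is $(a^ib^j)\mu(x,y)=a^{xik^j-yk_j}$, and $C(x,y)=\{\mu(x,yz):z\in\mathbb{Z}_m\}$. For $S\subseteq\mathbb{Z}_m$, $S^*$ is the multiplicative subsemigroup of $\mathbb{Z}_m$ generated by $S$ and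 $I(S^* )$ is its set of elements invertible in $\mathbb{Z}_m$; $\mathrm{orb}(x,S^* )=\{xy:y\in I(S^* )\}$, and it is basic if it meets $S$. *)

From mathcomp Require Import all_boot.


(* Z_m is represented by 'I_(m.-1.+1) (= 'I_m when 0 < m); arithmetic is
   done on the nat representatives and reduced mod m. *)
Notation Zm m := ('I_(m.-1.+1)).

Definition is_ind (m k n : nat) : Prop :=
  0 < n /\ k ^ n = 1 %[mod m] /\ (forall d, 0 < d -> k ^ d = 1 %[mod m] -> n <= d).

Definition kt (m k t : nat) : nat := (k ^ t - 1) %% m.

(* Elements a^i b^j of G(m,n,k), encoded as the pair (i, j). *)
Definition Gel (m n : nat) := (Zm m * 'I_(n.-1.+1))%type.

(* a^i b^j * a^i' b^j' = a^(i + i' k^(-j)) b^(j + j'); k^(-j) = k^(n-j) mod m *)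
Definition Gmul (m n k : nat) (g h : Gel m n) : Gel m n :=
  (inord ((g.1 + h.1 * k ^ (n - g.2)) %% m), inord ((g.2 + h.2) %% n)).

(* (a^i b^j)^-1 = a^(-i k^j) b^(-j) *)
Definition Ginv (m n k : nat) (g : Gel m n) : Gel m n :=
  (inord ((m - (g.1 * k ^ g.2) %% m) %% m), inord ((n - g.2) %% n)).

Definition Gcomm (m n k : nat) (x y : Gel m n) : Gel m n :=
  Gmul m n k (Gmul m n k (Ginv m n k x) (Ginv m n k y)) (Gmul m n k x y).

Definition rho (m n k : nat) (g : Gel m n) : {ffun Gel m n -> Gel m n} :=
  [ffun x => Gcomm m n k x g].
Definition lam (m n k : nat) (g : Gel m n) : {ffun Gel m n -> Gel m n} :=
  [ffun x => Gcomm m n k g x].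

(* composition of maps written on the right: x (f g) = (x f) g *)
Definition fcomp (T : finType) (f g : {ffun T -> T}) : {ffun T -> T} :=
  [ffun x => g (f x)].

Arguments fcomp {T}.
Definition map_semigroup (T : finType) (S : {set {ffun T -> T}}) :
    {set {ffun T -> T}} :=
  [set f | [forall U : {set {ffun T -> T}},
     (S \subset U) &&
     [forall g in U, forall h in U, fcomp g h \in U] ==> (f \in U)]].

Arguments map_semigroup {T}.
Definition PG (m n k : nat) : {set {ffun Gel m n -> Gel m n}} :=
  map_semigroup [set rho m n k g | g : Gel m n].
Definition LambdaG (m n k : nat) : {set {ffun Gel m n -> Gel m n}} :=
  map_semigroup [set lam m n k g | g : Gel m n].

Definition zmul (m : nat) (x y : Zm m) : Zm m := inord ((x * y) %% m).

Definition zstar (m : nat) (S : {set Zm m}) : {set Zm m} :=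
  [set x | [forall U : {set Zm m},
     (S \subset U) && [forall y in U, forall z in U, zmul m y z \in U]
     ==> (x \in U)]].

Definition Iunits (m : nat) (T : {set Zm m}) : {set Zm m} :=
  [set x in T | coprime x m].

Definition orb (m : nat) (x : Zm m) (T : {set Zm m}) : {set Zm m} :=
  [set zmul m x y | y in Iunits m T].

Definition basic (m : nat) (x : Zm m) (S : {set Zm m}) : bool :=
  ~~ [disjoint orb m x (zstar m S) & S].

Definition Rset (m n k : nat) : {set Zm m} :=
  [set (inord (kt m k j) : Zm m) | j : 'I_(n.-1.+1)].
Definition Lset (m n k : nat) : {set Zm m} :=
  [set (inord ((m - kt m k j) %% m) : Zm m) | j : 'I_(n.-1.+1)].

(* mu(x, y) : a^i b^j |-> a^(x i k^j - y k_j) -- note i, j are nat representatives *)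
Definition mu (m n k : nat) (x y : nat) : {ffun Gel m n -> Gel m n} :=
  [ffun g : Gel m n =>
     (inord ((x * g.1 * k ^ g.2 + (m - (y * kt m k g.2) %% m)) %% m), ord0)].

Definition Cset (m n k : nat) (x y : nat) : {set {ffun Gel m n -> Gel m n}} :=
  [set mu m n k x (y * z) | z : Zm m].

From mathcomp Require Import all_boot all_algebra cyclic ring.
Import GRing.Theory.

(* In Z_m, rho(a^s b^t) is the affine map mu(k_t, s k^t) and lambda(a^s b^t)
   is mu(-k_t, -s k^t); moreover mu(x, y) mu(x', y') = mu(x x', x' y), and
   mu(x, y) determines x and y because k - 1 is a unit mod m.  So the
   semigroup generated by the mu(r, y), r in S, lies in the disjoint union of
   the C(x, 1), x in S^*.  Conversely every mu(w, 0), w in S^*, is reached,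
   and a unit u of S^* with x u in S, which basicness of orb(x, S^* )
   provides, turns mu(x u, u z) into mu(x, z) after phi(m) - 1 right
   multiplications by mu(u, 0). *)

Section ModularArithmetic.
Context {m : nat}.
Hypothesis m_gt0 : 0 < m.

Lemma eqmodn_Zp a b : (1 < m -> (a%:R : 'Z_m)%R = b%:R%R) -> a = b %[mod m].
Proof.
have [m_gt1 eqZ|m_le1 _] := ltnP 1 m; first by rewrite -!(val_Zp_nat m_gt1) eqZ.
by rewrite (_ : m = 1) ?modn1 //; apply/anti_leq; rewrite m_le1 m_gt0.
Qed.

Lemma Zp_eqmodn a b : 1 < m -> a = b %[mod m] -> (a%:R : 'Z_m)%R = b%:R%R.
Proof. by move=> m_gt1 eqab; rewrite -(Zp_nat_mod m_gt1) eqab Zp_nat_mod. Qed.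

Lemma Zp_natBm a : 1 < m -> a <= m -> ((m - a)%:R : 'Z_m)%R = (- a%:R)%R.
Proof. by move=> m_gt1 le_am; rewrite natrB // pchar_Zp // sub0r. Qed.

Lemma Zp_natBmod a : 1 < m -> ((m - a %% m)%:R : 'Z_m)%R = (- a%:R)%R.
Proof. by move=> m_gt1; rewrite Zp_natBm ?Zp_nat_mod //; exact/ltnW/ltn_pmod/ltnW. Qed.

Lemma ltn_ord_Zm (i : Zm m) : i < m.
Proof. by rewrite -[m in _ < m](prednK m_gt0). Qed.

Lemma Zp_natB_ord (i : Zm m) : 1 < m -> ((m - i)%:R : 'Z_m)%R = (- i%:R)%R.
Proof. by move=> m_gt1; rewrite Zp_natBm //; exact/ltnW/ltn_ord_Zm. Qed.

Lemma val_inord_mod a : (inord (a %% m) : Zm m) = a %% m :> nat.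
Proof. by rewrite inordK // prednK // ltn_pmod. Qed.

Lemma Zm_eqmod {i j : Zm m} : i = j %[mod m] -> i = j.
Proof. by rewrite !modn_small ?ltn_ord_Zm // => /val_inj. Qed.

End ModularArithmetic.

Definition op_closure (T : finType) (op : T -> T -> T) (S : {set T}) : {set T} :=
  [set x | [forall U : {set T},
     (S \subset U) && [forall y in U, forall z in U, op y z \in U] ==> (x \in U)]].

Arguments op_closure {T}.

Section OpClosure.
Context {T : finType} {op : T -> T -> T} {S : {set T}}.
Local Notation op_closure := (op_closure op).

Lemma op_closure_gen x : x \in S -> x \in op_closure S.
Proof.
move=> xS; rewrite inE; apply/forallP => U; apply/implyP => /andP [sSU _].
exact: (subsetP sSU).
Qed.

Lemma op_closureM x y :
  x \in op_closure S -> y \in op_closure S -> op x y \in op_closure S.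
Proof.
rewrite !inE => /forallP xU /forallP yU; apply/forallP => U; apply/implyP => clU.
have /andP [_ /forall_inP opU] := clU.
exact: (forall_inP (opU x (implyP (xU U) clU)) y (implyP (yU U) clU)).
Qed.

Lemma op_closure_min (U : {set T}) : S \subset U ->
  (forall x y, x \in U -> y \in U -> op x y \in U) -> op_closure S \subset U.
Proof.
move=> sSU opU; apply/subsetP => x; rewrite inE => /forallP /(_ U) /implyP; apply.
rewrite sSU; apply/forall_inP => y yU; apply/forall_inP => z zU; exact: opU.
Qed.

End OpClosure.

Lemma map_semigroupE (T : finType) (S : {set {ffun T -> T}}) :
  map_semigroup S = op_closure fcomp S.
Proof. by []. Qed.

Lemma zstarE m (S : {set Zm m}) : zstar m S = op_closure (zmul m) S.
Proof. by []. Qed.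

Section Mu.
Context {m n k : nat}.
Hypothesis m_gt0 : 0 < m.

Lemma mu_eqmod x x' y y' : x = x' %[mod m] -> y = y' %[mod m] ->
  mu m n k x y = mu m n k x' y'.
Proof.
move=> eqx eqy; apply/ffunP=> g; rewrite !ffunE; congr (inord _, _).
rewrite -modnMml eqy modnMml.
by rewrite -!mulnA -modnDml -modnMml eqx modnMml modnDml.
Qed.

Lemma kt0 : kt m k 0 = 0.
Proof. by rewrite /kt expn0 subnn mod0n. Qed.

Lemma fcomp_mu x y x' y' :
  fcomp (mu m n k x y) (mu m n k x' y') = mu m n k (x * x') (x' * y).
Proof.
apply/ffunP=> g; rewrite !ffunE /= val_inord_mod // expn0 kt0 muln1 muln0 mod0n subn0.
congr (inord _, _); apply: (eqmodn_Zp m_gt0) => m_gt1.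
rewrite !(natrD, natrM, Zp_natBmod, Zp_nat_mod, pchar_Zp) //; ring.
Qed.

(* Evaluating at [a] recovers [x]; evaluating at [b] recovers [y (k - 1)]. *)
Lemma mu_inj (n_gt1 : 1 < m -> 1 < n) (cop_k1 : coprime m (k - 1)) x x' y y' :
  mu m n k x y = mu m n k x' y' -> x = x' %[mod m] /\ y = y' %[mod m].
Proof.
move=> eq_mu; have [m_gt1|m_le1] := ltnP 1 m; last first.
  by rewrite (_ : m = 1) ?modn1 //; apply/anti_leq; rewrite m_le1 m_gt0.
have {}n_gt1 := n_gt1 m_gt1.
split.
  have := congr1 (fun f : {ffun Gel m n -> Gel m n} => val (f (inord 1, ord0)).1) eq_mu.
  rewrite !ffunE /= !val_inord_mod // inordK ?prednK //.
  by rewrite expn0 kt0 !muln1 !muln0 mod0n subn0 !modnDr.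
have := congr1 (fun f : {ffun Gel m n -> Gel m n} => val (f (ord0, inord 1)).1) eq_mu.
rewrite !ffunE /= !val_inord_mod // inordK ?prednK ?(ltnW n_gt1) //.
rewrite !muln0 !mul0n !add0n => /(Zp_eqmodn _ _ m_gt1).
rewrite !(Zp_nat_mod, Zp_natBmod) // => /oppr_inj.
rewrite !natrM /kt !Zp_nat_mod // expn1 => /mulIr eqy.
by apply: (eqmodn_Zp m_gt0) => _; apply: eqy; rewrite unitZpE.
Qed.

End Mu.

Section Commutators.
Context {m n k : nat}.
Hypotheses (m_gt0 : 0 < m) (n_gt0 : 0 < n) (k_gt0 : 0 < k).
Hypothesis expk_n : k ^ n = 1 %[mod m].

Local Notation K := (k%:R : 'Z_m)%R.

Lemma expK_n : 1 < m -> (K ^+ n)%R = 1%R.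
Proof. by move=> m_gt1; rewrite -natrX (Zp_eqmodn _ _ m_gt1 expk_n). Qed.

Lemma expK_modn a b : 1 < m -> a = b %[mod n] -> (K ^+ a)%R = (K ^+ b)%R.
Proof.
by move=> m_gt1 eqab; rewrite -(expr_mod a (expK_n m_gt1)) eqab expr_mod ?expK_n.
Qed.

Lemma Zp_kt t : 1 < m -> ((kt m k t)%:R : 'Z_m)%R = (K ^+ t - 1)%R.
Proof. by move=> m_gt1; rewrite Zp_nat_mod // natrB ?expn_gt0 ?k_gt0 // natrX. Qed.

Lemma Gcomm_snd (x g : Gel m n) : (Gcomm m n k x g).2 = ord0.
Proof.
apply: val_inj; case: x g => [i j] [s t].
rewrite /Gcomm /Gmul /Ginv /= !val_inord_mod //.
apply/eqP; rewrite -(mod0n n); apply/eqP; apply: (eqmodn_Zp n_gt0) => n_gt1.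
rewrite !(Zp_nat_mod, natrD, Zp_natB_ord) //; ring.
Qed.

Lemma Gcomm_fst_Zp (x g : Gel m n) : 1 < m ->
  ((Gcomm m n k x g).1%:R : 'Z_m)%R =
  (x.1%:R * K ^+ x.2 * (K ^+ g.2 - 1) - g.1%:R * K ^+ g.2 * (K ^+ x.2 - 1))%R.
Proof.
move=> m_gt1; case: x g => [i j] [s t] /=.
rewrite /Gcomm /Gmul /Ginv /= !val_inord_mod //.
rewrite !(Zp_nat_mod, natrD, natrM, natrX, Zp_natBmod) //.
have expK_inv : (K ^+ (n - (n - j) %% n))%R = (K ^+ j)%R.
  apply: expK_modn => //; apply: (eqmodn_Zp n_gt0) => n_gt1.
  by rewrite Zp_natBmod // Zp_natB_ord // opprK.
have expK_invD :
    (K ^+ (n - ((n - j) %% n + (n - t) %% n) %% n))%R = (K ^+ j * K ^+ t)%R.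
  rewrite -exprD; apply: expK_modn => //; apply: (eqmodn_Zp n_gt0) => n_gt1.
  by rewrite Zp_natBmod // natrD !Zp_nat_mod // !Zp_natB_ord // natrD; ring.
have expKV : (K ^+ (n - j) * K ^+ j)%R = 1%R.
  by rewrite -exprD subnK ?expK_n // ltnW // ltn_ord_Zm.
by rewrite expK_inv expK_invD; ring: expKV.
Qed.

Lemma mu_eq_Zp x y (g h : Gel m n) : h.2 = ord0 ->
  (1 < m ->
     (h.1%:R : 'Z_m)%R = (x%:R * g.1%:R * K ^+ g.2 - y%:R * (K ^+ g.2 - 1))%R) ->
  mu m n k x y g = h.
Proof.
case: h => [c d] /= -> eqZ; rewrite ffunE; congr pair; apply: val_inj => /=.
rewrite val_inord_mod // -(modn_small (ltn_ord_Zm m_gt0 c)).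
apply/esym/(eqmodn_Zp m_gt0) => m_gt1.
by rewrite eqZ // !(natrD, natrM, natrX, Zp_natBmod, Zp_kt).
Qed.

Lemma rho_mu (g : Gel m n) :
  rho m n k g = mu m n k (kt m k g.2) (g.1 * k ^ g.2).
Proof.
apply/ffunP => x; rewrite ffunE; apply/esym/mu_eq_Zp; first exact: Gcomm_snd.
by move=> m_gt1; rewrite Gcomm_fst_Zp // Zp_kt // natrM natrX; ring.
Qed.

Lemma lam_mu (g : Gel m n) :
  lam m n k g = mu m n k ((m - kt m k g.2) %% m) ((m - (g.1 * k ^ g.2) %% m) %% m).
Proof.
apply/ffunP => x; rewrite ffunE; apply/esym/mu_eq_Zp; first exact: Gcomm_snd.
move=> m_gt1; rewrite Gcomm_fst_Zp // !Zp_nat_mod // Zp_natBmod //.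
rewrite Zp_natBm ?Zp_kt // ?natrM ?natrX; last exact/ltnW/ltn_pmod.
ring.
Qed.

End Commutators.

Section SemigroupOfMu.
Context {m n k : nat}.
Hypotheses (m_gt0 : 0 < m) (n_gt1 : 1 < m -> 1 < n) (cop_k1 : coprime m (k - 1)).

Local Notation mu := (mu m n k).
Local Notation C x := (Cset m n k x 1).

Lemma mem_Cset (x : Zm m) z : mu x z \in C x.
Proof.
apply/imsetP; exists (inord (z %% m)) => //; apply: mu_eqmod => //.
by rewrite mul1n val_inord_mod // modn_mod.
Qed.

Lemma disjoint_Cset (x y : Zm m) : x != y -> [disjoint C x & C y].
Proof.
move=> neq_xy; rewrite disjoint_subset; apply/subsetP => _ /imsetP [z _ ->].
rewrite inE; apply/imsetP => -[z' _ /(mu_inj m_gt0 n_gt1 cop_k1) [eq_xy _]].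
by rewrite (Zm_eqmod m_gt0 eq_xy) eqxx in neq_xy.
Qed.

Lemma card_bigcup_Cset (X : {set Zm m}) : #|\bigcup_(x in X) C x| = #|X| * m.
Proof.
have -> : \bigcup_(x in X) C x =
          [set mu p.1 (1 * p.2) | p : Zm m * Zm m in setX X [set: Zm m]].
  apply/setP => f; apply/bigcupP/imsetP => [[x xX /imsetP [z _ ->]]|[[x z]]].
    by exists (x, z); rewrite // in_setX xX in_setT.
  by rewrite in_setX /= => /andP [xX _] ->; exists x => //; apply/imsetP; exists z.
rewrite card_in_imset.
  by rewrite cardsX cardsT card_ord; congr (_ * _); apply: prednK.
move=> [x z] [x' z'] _ _ /= /(mu_inj m_gt0 n_gt1 cop_k1) [eq_x].
by rewrite !mul1n => eq_z; rewrite (Zm_eqmod m_gt0 eq_x) (Zm_eqmod m_gt0 eq_z).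
Qed.

Variables (S : {set Zm m}) (Gen : {set {ffun Gel m n -> Gel m n}}).
Hypothesis Gen_mu :
  forall f, f \in Gen -> exists2 r : Zm m, r \in S & exists y, f = mu r y.
Hypothesis mu_Gen : forall (r : Zm m) y, r \in S -> mu r y \in Gen.

Local Notation P := (map_semigroup Gen).
Local Notation Sstar := (zstar m S).

Lemma mu_zmul (x y : Zm m) z : mu (x * y) z = mu (zmul m x y) z.
Proof. by apply: mu_eqmod; rewrite ?val_inord_mod ?modn_mod. Qed.

Lemma semigroup_sub_Cset : P \subset \bigcup_(x in Sstar) C x.
Proof.
rewrite map_semigroupE; apply: op_closure_min.
  apply/subsetP => _ /Gen_mu [r rS [y ->]].
  by apply/bigcupP; exists r; [exact: op_closure_gen | exact: mem_Cset].
move=> _ _ /bigcupP [x xS /imsetP [z _ ->]] /bigcupP [x' x'S /imsetP [z' _ ->]].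
rewrite fcomp_mu // mu_zmul; apply/bigcupP; exists (zmul m x x'); last exact: mem_Cset.
exact: op_closureM.
Qed.

Lemma mem_semigroup_mu0 (w : Zm m) : w \in Sstar -> mu w 0 \in P.
Proof.
pose Mu0 := [set w : Zm m | mu w 0 \in P].
suff /subsetP/(_ w)/[apply] : Sstar \subset Mu0 by rewrite inE.
rewrite zstarE; apply: op_closure_min => [|w1 w2].
  by apply/subsetP => r rS; rewrite inE map_semigroupE op_closure_gen ?mu_Gen.
rewrite !(@in_set _ (fun w : Zm m => mu w 0 \in P)) -mu_zmul => w1P w2P.
rewrite -(muln0 w2) -(fcomp_mu m_gt0 _ _ _ 0); exact: op_closureM.
Qed.

Lemma mem_semigroup_mu_expn (w : Zm m) c y e : w \in Sstar -> mu c y \in P ->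
  mu (c * w ^ e) (w ^ e * y) \in P.
Proof.
move=> wS cyP; elim: e => [|e IHe]; first by rewrite expn0 muln1 mul1n.
have := op_closureM _ _ IHe (mem_semigroup_mu0 _ wS); rewrite fcomp_mu //.
by rewrite expnSr !mulnA (mulnC (w ^ e) w).
Qed.

Hypothesis basic_orb : forall x, x \in Sstar -> basic m x S.

(* Basicness gives a unit [u] of [S^*] with [x u] in [S], and then
   [mu(x, z) = mu(x u, u z) mu(u, 0)^(phi(m) - 1)]. *)
Lemma Cset_sub_semigroup : \bigcup_(x in Sstar) C x \subset P.
Proof.
apply/subsetP => _ /bigcupP [x xS /imsetP [z _ ->]].
have /pred0Pn [_ /andP [/imsetP [u uI ->] xuS]] := basic_orb _ xS.
move: uI; rewrite inE => /andP [uS cop_u].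
have expu_phi : u ^ (totient m).-1 * u = 1 %[mod m].
  by rewrite -expnSr (@prednK (totient m)) ?Euler_exp_totient // totient_gt0.
have xuP : mu (zmul m x u) (u * z) \in P := op_closure_gen _ (mu_Gen _ _ xuS).
have := mem_semigroup_mu_expn _ _ _ (totient m).-1 uS xuP.
rewrite (mu_eqmod _ x _ (1 * z)) //.
  by rewrite val_inord_mod // modnMml mulnAC -mulnA -modnMmr expu_phi modnMmr muln1.
by rewrite mulnA -modnMml expu_phi modnMml.
Qed.

Theorem semigroup_mu_Cset :
  P = \bigcup_(x in Sstar) C x
  /\ (forall x y, x \in Sstar -> y \in Sstar -> x != y -> [disjoint C x & C y])
  /\ #|P| = #|Sstar| * m.
Proof.
have P_Cset : P = \bigcup_(x in Sstar) C x.
  by apply/eqP; rewrite eqEsubset semigroup_sub_Cset Cset_sub_semigroup.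
split=> //; split=> [x y _ _|]; first exact: disjoint_Cset.
by rewrite P_Cset card_bigcup_Cset.
Qed.

End SemigroupOfMu.

Lemma ind_gt1 {m n k : nat} :
  0 < k -> coprime m (k - 1) -> is_ind m k n -> 1 < m -> 1 < n.
Proof.
move=> k_gt0 cop_k1 [n_gt0 [expk_n _]] m_gt1; case: n n_gt0 expk_n => [|[|n]] //= _.
rewrite expn1 => k_eq1.
have /gcdn_idPl gcd_m : m %| k - 1 by rewrite -eqn_mod_dvd // k_eq1.
by move: cop_k1; rewrite /coprime gcd_m => /eqP m_eq1; rewrite m_eq1 in m_gt1.
Qed.

Section CommutatorGenerators.
Context {m n k : nat}.
Hypotheses (m_gt0 : 0 < m) (n_gt0 : 0 < n) (k_gt0 : 0 < k).
Hypothesis expk_n : k ^ n = 1 %[mod m].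

Lemma expk_subnK (j : Zm n) y : y * k ^ (n - j) * k ^ j = y %[mod m].
Proof.
rewrite -mulnA -expnD subnK; last exact/ltnW/ltn_ord_Zm.
by rewrite -modnMmr expk_n modnMmr muln1.
Qed.

Lemma rho_mu_gen f : f \in [set rho m n k g | g : Gel m n] ->
  exists2 r : Zm m, r \in Rset m n k & exists y, f = mu m n k r y.
Proof.
case/imsetP => g _ ->; exists (inord (kt m k g.2)); first by apply/imsetP; exists g.2.
exists (g.1 * k ^ g.2); rewrite rho_mu //; apply: mu_eqmod => //.
by rewrite /kt val_inord_mod // modn_mod.
Qed.

Lemma mu_rho_gen (r : Zm m) y :
  r \in Rset m n k -> mu m n k r y \in [set rho m n k g | g : Gel m n].
Proof.
case/imsetP => j _ ->; apply/imsetP; exists (inord ((y * k ^ (n - j)) %% m), j) => //.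
rewrite rho_mu //=; apply: mu_eqmod; first by rewrite /kt val_inord_mod // modn_mod.
by rewrite val_inord_mod // modnMml expk_subnK.
Qed.

Lemma lam_mu_gen f : f \in [set lam m n k g | g : Gel m n] ->
  exists2 r : Zm m, r \in Lset m n k & exists y, f = mu m n k r y.
Proof.
case/imsetP => g _ ->; exists (inord ((m - kt m k g.2) %% m)).
  by apply/imsetP; exists g.2.
exists ((m - (g.1 * k ^ g.2) %% m) %% m); rewrite lam_mu //; apply: mu_eqmod => //.
by rewrite val_inord_mod // modn_mod.
Qed.

Lemma mu_lam_gen (r : Zm m) y :
  r \in Lset m n k -> mu m n k r y \in [set lam m n k g | g : Gel m n].
Proof.
case/imsetP => j _ ->; apply/imsetP.
exists (inord (((m - y %% m) * k ^ (n - j)) %% m), j) => //.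
rewrite lam_mu //=; apply: mu_eqmod; first by rewrite val_inord_mod // modn_mod.
rewrite val_inord_mod // modnMml; apply: (eqmodn_Zp m_gt0) => m_gt1.
rewrite !(Zp_natBmod, Zp_nat_mod) // !natrM Zp_natBmod // !mulNr opprK -!natrM.
exact/esym/Zp_eqmodn/expk_subnK.
Qed.

End CommutatorGenerators.

Theorem corollary4p12 (m n k : nat) :
  0 < m -> 0 < n -> 0 < k ->
  coprime m (k - 1) -> is_ind m k n ->
  (* (i) *)
  ((forall x, x \in zstar m (Rset m n k) -> basic m x (Rset m n k)) ->
     PG m n k = \bigcup_(x in zstar m (Rset m n k)) Cset m n k x 1
     /\ (forall x y, x \in zstar m (Rset m n k) -> y \in zstar m (Rset m n k) ->
           x != y -> [disjoint Cset m n k x 1 & Cset m n k y 1])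
     /\ #|PG m n k| = #|zstar m (Rset m n k)| * m)
  /\
  (* (ii) *)
  ((forall x, x \in zstar m (Lset m n k) -> basic m x (Lset m n k)) ->
     LambdaG m n k = \bigcup_(x in zstar m (Lset m n k)) Cset m n k x 1
     /\ (forall x y, x \in zstar m (Lset m n k) -> y \in zstar m (Lset m n k) ->
           x != y -> [disjoint Cset m n k x 1 & Cset m n k y 1])
     /\ #|LambdaG m n k| = #|zstar m (Lset m n k)| * m).
Proof.
move=> m_gt0 n_gt0 k_gt0 cop_k1 ind_k.
have n_gt1 := ind_gt1 k_gt0 cop_k1 ind_k; have [_ [expk_n _]] := ind_k.
split=> basic_orb; apply: (semigroup_mu_Cset m_gt0 n_gt1 cop_k1) => //.
- exact: rho_mu_gen.
- exact: mu_rho_gen.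
- exact: lam_mu_gen.
- exact: mu_lam_gen.
Qed.
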